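(* There exists a constant $C>0$ such that for all $n\ge2$, \[ \|Z_n-Z_{n-1}\|_{L^1}\le C\,\frac{\log n}{n}, \] where $Z_n$ and $Z_{n-1}$ are defined on a common probability space via a coupling of the geometric variables as described in the context.
   Context: For $m\ge1$, $i\in\{1,\dots,m\}$ let $p_i^m=\frac{m-i+1}{m}$ and $\operatorname{Geom}(p)$ be the geometric law on $\{1,2,\dots\}$, $P(k)=p(1-p)^{k-1}$. For $n\ge2$, the variables $(\tau_i^{n-1})_{1\le i\le n-1}$ (independent, $\tau_i^{n-1}\sim\operatorname{Geom}(p_i^{n-1})$) and $(\tau_i^n)_{1\le i\le n}$ (independent, $\tau_i^n\sim\operatorname{Geom}(p_i^n)$) are defined on a common probability space such that $\tau_{i-1}^{n-1}\le\tau_i^n$ a.s. for $2\le i\le n$. Then $Z_m=\frac1m\sum_{i=1}^m\tau_i^m-\log m$ for $m\in\{n-1,n\}$ (so $Z_m$ has the law of $T_m/m-\log m$, $T_m$ the coupon collector's completion time for $m$ coupons). *)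

From HB Require Import structures.
From mathcomp Require Import all_boot all_order all_algebra.
From mathcomp Require Import all_classical all_reals all_analysis.
Set Implicit Arguments. Unset Strict Implicit. Unset Printing Implicit Defensive.
Import Order.TTheory GRing.Theory Num.Theory.
Local Open Scope classical_set_scope.
Local Open Scope ring_scope.

Definition pcc {R : realType} (m i : nat) : R := ((m - i + 1)%:R / m%:R).

Definition geom_law {R : realType} {d : measure_display} {T : measurableType d}
  (P : probability T R) (p : R) (X : T -> R) : Prop :=
  measurable_fun setT X /\
  forall k : nat, (0 < k)%N ->
    P (X @^-1` [set k%:R]) = (p * (1 - p) ^+ k.-1)%:E.

Definition mutually_independent {R : realType} {d : measure_display}
  {T : measurableType d} (P : probability T R) (I : set nat) (X : nat -> T -> R)
  : Prop :=
  forall (J : seq nat), uniq J -> (forall j, j \in J -> I j) ->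
  forall B : nat -> set R, (forall j, measurable (B j)) ->
    P (\big[setI/setT]_(j <- J) (X j @^-1` B j))
    = (\prod_(j <- J) P (X j @^-1` B j))%E.

Definition Zcc {R : realType} {T : Type} (m : nat) (tau : nat -> T -> R) (t : T) : R :=
  (m%:R)^-1 * (\sum_(1 <= i < m.+1) tau i t) - ln (m%:R).

From HB Require Import structures.
From mathcomp Require Import all_boot all_order all_algebra.
From mathcomp Require Import all_classical all_reals all_analysis.
From mathcomp Require Import ring lra zify measurable_realfun.
Import Order.TTheory GRing.Theory Num.Theory.
Import numFieldNormedType.Exports.
Local Open Scope classical_set_scope.
Local Open Scope ring_scope.

(* Write S_m for the sum of the tau_i^m, so that
     Z_n - Z_(n-1) = (S_n - S_(n-1))/n - S_(n-1)/(n(n-1)) - ln(n/(n-1)).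
   Under the coupling, S_n - S_(n-1) = tau_1^n + sum_i (tau_i^n - tau_(i-1)^(n-1))
   and S_(n-1) are almost surely nonnegative, so |Z_n - Z_(n-1)| is dominated by
   the same expression with every sign turned into +. Its expectation only needs
   E[Geom(p)] = 1/p, i.e. E S_m = m H_m with H_m the harmonic number, and equals
   (2 H_(n-1) + 1)/n + ln(n/(n-1)) <= 10 ln n / n because H_k <= 2 ln(k+1). *)

Definition harmonic_number {R : fieldType} (k : nat) : R :=
  \sum_(1 <= i < k.+1) i%:R^-1.

Section real_bounds.
Context {R : realType}.

Lemma inv_le_2_lnS_sub_ln (k : R) : 1 <= k -> k^-1 <= 2 * (ln (k + 1) - ln k).
Proof.
move=> k_ge1; have k_gt0 : 0 < k by lra.
have lnk : ln k - ln (k + 1) <= - (k + 1)^-1.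
  rewrite -ln_div ?posrE; try lra.
  have -> : k / (k + 1) = 1 + - (k + 1)^-1 by field; lra.
  apply: le_ln1Dx; rewrite ltrN2 invf_lt1; lra.
have : k^-1 <= 2 * (k + 1)^-1.
  have -> : 2 * (k + 1)^-1 = k^-1 + (k - 1) / (k * (k + 1)) by field; lra.
  by rewrite lerDl divr_ge0 //; nra.
lra.
Qed.

Lemma harmonic_numberS (k : nat) :
  harmonic_number k.+1 = harmonic_number k + k.+1%:R^-1 :> R.
Proof. by rewrite /harmonic_number big_nat_recr. Qed.

Lemma harmonic_number_le_2ln (k : nat) : harmonic_number k <= 2 * ln k.+1%:R :> R.
Proof.
elim: k => [|k IH]; first by rewrite /harmonic_number big_geq // ln1 mulr0.
have := @inv_le_2_lnS_sub_ln k.+1%:R; rewrite ler1n natr1 => /(_ isT) h.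
rewrite harmonic_numberS; apply: le_trans (lerD IH h) _.
by rewrite -mulrDr addrC subrK.
Qed.

Lemma lnS_sub_ln_le_inv (m : nat) : (0 < m)%N ->
  0 <= ln m.+1%:R - ln (m%:R : R) <= m%:R^-1.
Proof.
move=> m_gt0; have m_pos : (0 : R) < m%:R by rewrite ltr0n.
rewrite subr_ge0 ler_ln ?posrE ?ltr0n ?ler_nat //= -ln_div ?posrE ?ltr0n //.
have -> : m.+1%:R / m%:R = 1 + m%:R^-1 :> R.
  by rewrite -addn1 natrD mulrDl divff ?gt_eqF // mul1r addrC.
rewrite leqnSn /=; apply: le_ln1Dx.
by rewrite (lt_le_trans (ltrN10 _)) // invr_ge0 ltW.
Qed.

Lemma pcc_itv (n i : nat) : (1 <= i <= n)%N -> 0 < (pcc n i : R) <= 1.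
Proof.
move=> i_in; have n_gt0 : (0 < n)%N by lia.
by rewrite /pcc divr_gt0 ?ltr0n ?addn1 //= ler_pdivrMr ?ltr0n // mul1r ler_nat; lia.
Qed.

Lemma sum_inv_pcc (n : nat) :
  \sum_(1 <= i < n.+1) (pcc n i)^-1 = n%:R * harmonic_number n :> R.
Proof.
rewrite big_nat_rev /= /harmonic_number mulr_sumr; apply: eq_big_nat => i i_in.
by rewrite /pcc invf_div; congr (_ / _%:R); lia.
Qed.

(* The bound is (s2 - s1)/(m+1) + s1/((m+1)m) + ln((m+1)/m), regrouped as an
   affine function of s2 and s1. *)
Lemma normr_Zcc_step_le (m : nat) (s1 s2 : R) : (0 < m)%N -> 0 <= s1 <= s2 ->
  `|(m.+1%:R^-1 * s2 - ln m.+1%:R) - (m%:R^-1 * s1 - ln m%:R)|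
  <= m.+1%:R^-1 * s2 + ((m.+1%:R * m%:R)^-1 - m.+1%:R^-1) * s1
     + (ln m.+1%:R - ln m%:R).
Proof.
move=> m_gt0 /andP[s1_ge0 s12]; have /andP[K_ge0 _] := lnS_sub_ln_le_inv _ m_gt0.
have m_pos : (0 : R) < m%:R by rewrite ltr0n.
have inv_m : m%:R^-1 = m.+1%:R^-1 + (m.+1%:R * m%:R)^-1 :> R.
  by rewrite -natr1; field; apply/andP; split; apply/eqP; lra.
have a_ge0 : 0 <= m.+1%:R^-1 * (s2 - s1) by rewrite mulr_ge0 ?subr_ge0.
have b_ge0 : 0 <= (m.+1%:R * m%:R)^-1 * s1 by rewrite mulr_ge0 // invr_ge0 mulr_ge0.
rewrite inv_m ler_norml.
set x := m.+1%:R^-1 in a_ge0 *; set y := (m.+1%:R * m%:R)^-1 in b_ge0 *.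
rewrite mulrBr in a_ge0; rewrite !mulrDl; lra.
Qed.

Lemma coupon_mean_bound (m : nat) : (0 < m)%N ->
  m.+1%:R^-1 * (m.+1%:R * harmonic_number m.+1)
  + ((m.+1%:R * m%:R)^-1 - m.+1%:R^-1) * (m%:R * harmonic_number m)
  + (ln m.+1%:R - ln m%:R) <= 10 * (ln m.+1%:R / m.+1%:R) :> R.
Proof.
move=> m_gt0; have /andP[_ K_le] := lnS_sub_ln_le_inv _ m_gt0.
have m_ge1 : (1 : R) <= m%:R by rewrite ler1n.
have H_le := harmonic_number_le_2ln m.
have ln_ge : 1 <= 2 * ln m.+1%:R :> R.
  have := @inv_le_2_lnS_sub_ln 1 (lexx _).
  rewrite invr1 ln1 subr0 => /le_trans; apply; rewrite ler_pM2l ?ler_ln ?posrE //.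
  by rewrite -natr1 lerD2r.
rewrite harmonic_numberS -natr1 in K_le ln_ge H_le *.
move: (m%:R) (harmonic_number m) m_ge1 K_le ln_ge H_le => x H x_ge1 K_le ln_ge H_le.
have x_gt0 : 0 < x by lra.
have -> : (x + 1)^-1 * ((x + 1) * (H + (x + 1)^-1))
    + (((x + 1) * x)^-1 - (x + 1)^-1) * (x * H) + (ln (x + 1) - ln x)
    = (x + 1)^-1 * (2 * H + 1) + (ln (x + 1) - ln x).
  by field; apply/andP; split; apply/eqP; lra.
have inv_x : x^-1 <= 2 * (x + 1)^-1.
  have -> : 2 * (x + 1)^-1 = x^-1 + (x - 1) / (x * (x + 1)) by field; lra.
  by rewrite lerDl divr_ge0 //; nra.
have y_gt0 : 0 < (x + 1)^-1 by rewrite invr_gt0; lra.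
set y := (x + 1)^-1 in inv_x y_gt0 *; set L := ln (x + 1) in K_le ln_ge H_le *.
have : 0 <= y * (10 * L - 2 * H - 3) by rewrite mulr_ge0 //; lra.
lra.
Qed.

End real_bounds.

Lemma ler_sum_shift {R : numDomainType} (a b : nat -> R) (m : nat) :
  0 <= b 1%N -> (forall i, (1 <= i <= m)%N -> a i <= b i.+1) ->
  \sum_(1 <= i < m.+1) a i <= \sum_(1 <= i < m.+2) b i.
Proof.
move=> b1_ge0 ab; rewrite [leRHS]big_ltn // [\sum_(2 <= i < _) _]big_add1 /=.
rewrite -[leLHS]add0r.
by apply: lerD => //; apply: ler_sum_nat.
Qed.

Lemma ae_forall_in {d} {T : measurableType d} {R : realType}
    {mu : {measure set T -> \bar R}} {I : pred nat} {Q : nat -> T -> Prop} :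
  (forall i, I i -> {ae mu, forall x, Q i x}) ->
  {ae mu, forall x, forall i, I i -> Q i x}.
Proof.
move=> hQ; apply: ae_foralln => i.
have [Ii|NIi] := boolP (I i); first by apply: filterS (hQ i Ii) => x Qx _.
by apply: aeW => x Ii; case/negP: NIi.
Qed.

Section integral_lemmas.
Local Open Scope ereal_scope.
Context {d} {T : measurableType d} {R : realType} {mu : {measure set T -> \bar R}}.
Context {D : set T} (mD : measurable D).

Lemma ge0_ae_le_integral (f g : T -> \bar R) :
  (forall x, D x -> 0 <= f x) -> measurable_fun D f -> mu.-integrable D g ->
  {ae mu, forall x, D x -> f x <= g x} ->
  \int[mu]_(x in D) f x <= \int[mu]_(x in D) g x.
Proof.
move=> f_ge0 mf ig [N [mN N0 fgN]].
rewrite (ge0_negligible_integral mN mD mf f_ge0 N0).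
rewrite (negligible_integral mN mD ig N0).
have mDN : measurable (D `\` N) by exact: measurableD.
apply: ge0_le_integral => //.
- by move=> x [Dx _]; exact: f_ge0.
- by apply: (measurable_funS mD _ mf) => x [].
- by apply: (measurable_funS mD _ (measurable_int mu ig)) => x [].
- move=> x [Dx Nx]; apply: contra_notP Nx => Nfg; apply: fgN => /(_ Dx).
  exact: Nfg.
Qed.

Lemma integrable_sum_EFin (I : eqType) (s : seq I) (f : I -> T -> R) :
  (forall i, i \in s -> mu.-integrable D (EFin \o f i)) ->
  mu.-integrable D (fun x => (\sum_(i <- s) f i x)%:E).
Proof.
elim: s => [|i s IH] fs.
  by under eq_fun do rewrite big_nil; exact: integrable0.
under eq_fun do rewrite big_cons EFinD.
apply: integrableD => //; first by apply: fs; rewrite mem_head.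
by apply: IH => j js; apply: fs; rewrite in_cons js orbT.
Qed.

Lemma integral_sum_EFin (I : eqType) (s : seq I) (f : I -> T -> R) :
  (forall i, i \in s -> mu.-integrable D (EFin \o f i)) ->
  \int[mu]_(x in D) (\sum_(i <- s) f i x)%:E
  = \sum_(i <- s) \int[mu]_(x in D) (f i x)%:E.
Proof.
elim: s => [|i s IH] fs.
  by under eq_integral do rewrite big_nil; rewrite integral0 big_nil.
have fs' j : j \in s -> mu.-integrable D (EFin \o f j).
  by move=> js; apply: fs; rewrite in_cons js orbT.
under eq_integral do rewrite big_cons EFinD.
rewrite integralD //; first by rewrite IH // big_cons.
- by apply: fs; rewrite mem_head.
- exact: integrable_sum_EFin.
Qed.

End integral_lemmas.

Section affine_expectation.
Local Open Scope ereal_scope.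
Context {d} {T : measurableType d} {R : realType} {P : probability T R}.
Context {X Y : T -> R} (a b c : R).
Hypotheses (iX : P.-integrable setT (EFin \o X))
  (iY : P.-integrable setT (EFin \o Y)).

Let affine_EFin : EFin \o (fun t => a * X t + b * Y t + c)%R
  = (fun t => a%:E * (X t)%:E) \+ (fun t => b%:E * (Y t)%:E) \+ cst c%:E.
Proof. by apply/funext => t; rewrite /= !EFinD !EFinM. Qed.

Let integrable_lin :
  P.-integrable setT ((fun t => a%:E * (X t)%:E) \+ (fun t => b%:E * (Y t)%:E)).
Proof. by apply: integrableD => //; apply: integrableZl. Qed.

Lemma integrable_affine :
  P.-integrable setT (EFin \o (fun t => a * X t + b * Y t + c)%R).
Proof.
rewrite affine_EFin; apply: integrableD => //.
exact: finite_measure_integrable_cst.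
Qed.

Lemma integral_affine (x y : R) :
  \int[P]_t (X t)%:E = x%:E -> \int[P]_t (Y t)%:E = y%:E ->
  \int[P]_t (a * X t + b * Y t + c)%:E = (a * x + b * y + c)%:E.
Proof.
move=> EX EY; rewrite -[fun t => _]/(EFin \o _) affine_EFin.
rewrite integralD //; last exact: finite_measure_integrable_cst.
rewrite integralD //; try by apply: integrableZl.
rewrite !integralZl // EX EY integral_cst // !EFinD !EFinM -[c%:E in RHS]mule1.
by congr (_ + _ * _); exact: probability_setT.
Qed.

End affine_expectation.

Section geometric_series.
Context {R : realType}.

Lemma eseries_EFin (u : nat -> R) (l : R) :
  series u @ \oo --> l -> (\sum_(k <oo) (u k)%:E = l%:E)%E.
Proof.
move=> ul; rewrite (_ : (fun n => \sum_(0 <= k < n) (u k)%:E)%E = EFin \o series u).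
  by rewrite EFin_lim ?(cvg_lim _ ul) //; exact: (cvgP _ ul).
by apply/funext => n; rewrite /= sumEFin.
Qed.

Lemma series_natS_geometric (p : R) (N : nat) : p != 0 ->
  series (fun k => k.+1%:R * (p * (1 - p) ^+ k)) N
  = (1 - (1 - p) ^+ N) / p - N%:R * (1 - p) ^+ N.
Proof.
move=> p_neq0; elim: N => [|N IH].
  by rewrite /series /= big_geq // expr0 subrr !mul0r subr0.
by rewrite seriesSr IH exprS -natr1; field.
Qed.

Lemma cvg_series_natS_geometric (p : R) : 0 < p <= 1 ->
  series (fun k => k.+1%:R * (p * (1 - p) ^+ k)) @ \oo --> p^-1.
Proof.
move=> /andP[p_gt0 p_le1]; set q := 1 - p; set u := fun k => _.
have q_ge0 : 0 <= q by rewrite subr_ge0.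
have q_lt1 : `|q| < 1 by rewrite ger0_norm // ltrBlDr ltrDl.
have partial N := @series_natS_geometric p N (lt0r_neq0 p_gt0).
have qN : GRing.exp q @ \oo --> 0 := cvg_expr q_lt1.
(* The partial sums are bounded by p^-1, so the series converges; its terms
   then tend to 0, which is what controls N q^N. *)
have cvg_u : cvgn (series u).
  apply: nondecreasing_is_cvgn.
    apply/nondecreasing_seqP => N; rewrite seriesSr lerDl /u.
    by rewrite !mulr_ge0 ?exprn_ge0 ?(ltW p_gt0).
  exists p^-1 => _ [N _ <-]; rewrite partial lerBlDr -[leLHS]addr0.
  apply: lerD; last by rewrite mulr_ge0 ?exprn_ge0.
  by rewrite ler_pdivrMr // mulVf ?lt0r_neq0 // gerBl exprn_ge0.
have NqN : (fun N => N%:R * q ^+ N) @ \oo --> 0.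
  have -> : (fun N => N%:R * q ^+ N) = (fun N => p^-1 * u N - q ^+ N).
    by apply/funext => N; rewrite /u -natr1; field; exact: lt0r_neq0.
  have := cvgB (cvgMl_tmp (a := p^-1) (cvg_series_cvg_0 cvg_u)) qN.
  by rewrite mulr0 subr0; exact.
have -> : series u = fun N => (1 - q ^+ N) / p - N%:R * q ^+ N.
  by apply/funext => N; exact: partial.
have := cvgB (cvgMr_tmp (b := p^-1) (cvgB (cvg_cst (1 : R)) qN)) NqN.
by rewrite !subr0 mul1r; exact.
Qed.

End geometric_series.

Section geom_law_moments.
Local Open Scope ereal_scope.
Context {d} {T : measurableType d} {R : realType} {P : probability T R}.
Context {p : R} {X : T -> R}.
Hypotheses (p01 : (0 < p <= 1)%R) (hX : geom_law P p X).

Let level k := X @^-1` [set k.+1%:R].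
Let support := \bigcup_k level k.

Let mX : measurable_fun setT X. Proof. exact: hX.1. Qed.

Let mlevel k : measurable (level k).
Proof.
by rewrite /level -[X @^-1` _]setTI; apply: mX => //; exact: measurable_set1.
Qed.

Let msupport : measurable support.
Proof. exact: bigcup_measurable. Qed.

Let level_trivIset : trivIset setT level.
Proof.
move=> i j _ _ [t [/= Xi Xj]]; apply/eqP.
by rewrite -eqSS -(eqr_nat R) -Xi -Xj.
Qed.

Let support_ge0 t : support t -> (0 <= X t)%R.
Proof. by case=> k _ ->; exact: ler0n. Qed.

Let P_level k : P (level k) = (p * (1 - p) ^+ k)%:E.
Proof. exact: hX.2. Qed.

Let P_not_support : P (~` support) = 0.
Proof.
rewrite probability_setC // measure_bigcup //.
rewrite (eq_eseriesl _ _ (Q := xpredT)); last by move=> k; rewrite in_setT.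
rewrite (eq_eseriesr (g := fun k => (p * (1 - p) ^+ k)%:E)); last first.
  by move=> k _; exact: P_level.
case/andP: p01 => p_gt0 p_le1.
have q_lt1 : (`|1 - p| < 1)%R by rewrite ger0_norm ?subr_ge0 // ltrBlDr ltrDl.
have := cvg_geometric_series (a := p) q_lt1; rewrite subKr divff ?lt0r_neq0 //.
by move/eseries_EFin => ->; rewrite subee.
Qed.

Let integral_support : \int[P]_(t in support) (X t)%:E = (p^-1)%:E.
Proof.
have mXs : measurable_fun support (EFin \o X).
  by apply/measurable_EFinP; exact: measurable_funS measurableT (subsetT _) mX.
have Xs_ge0 t : support t -> 0 <= (X t)%:E by move/support_ge0; rewrite lee_fin.
rewrite (ge0_integral_bigcup P mlevel mXs Xs_ge0 level_trivIset).
rewrite (eq_eseriesr (g := fun k => (k.+1%:R * (p * (1 - p) ^+ k))%:E)).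
  by apply: eseries_EFin; exact: cvg_series_natS_geometric.
move=> k _; rewrite (eq_integral (fun _ => k.+1%:R%:E)); last first.
  by move=> t /[!inE] Xt; rewrite /= Xt.
by rewrite integral_cst // EFinM; congr (_ * _); exact: P_level.
Qed.

Lemma geom_law_ae_ge0 : {ae P, forall t, (0 <= X t)%R}.
Proof.
exists (~` support); split => //; first exact: measurableC.
by move=> t /= NXt_ge0 /support_ge0.
Qed.

Lemma geom_law_integrable : P.-integrable setT (EFin \o X).
Proof.
apply/integrableP; split; first exact/measurable_EFinP.
have mabsX : measurable_fun setT (fun t => `|(X t)%:E|).
  by apply: measurableT_comp => //; exact/measurable_EFinP.
rewrite (ge0_negligible_integral (measurableC msupport) measurableT mabsX
  (fun t _ => abse_ge0 _) P_not_support).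
rewrite setTD setCK (eq_integral (fun t => (X t)%:E)) ?integral_support ?ltry //.
by move=> t /[!inE] /support_ge0 Xt_ge0; rewrite /= ger0_norm.
Qed.

Lemma geom_law_integral : \int[P]_t (X t)%:E = (p^-1)%:E.
Proof.
rewrite (negligible_integral (measurableC msupport) measurableT
  geom_law_integrable P_not_support).
by rewrite setTD setCK integral_support.
Qed.

End geom_law_moments.

Section coupon_collector_time.
Context {d} {T : measurableType d} {R : realType} {P : probability T R}.
Context {n : nat} {tau : nat -> T -> R}.
Hypothesis tau_geom : forall i, (1 <= i <= n)%N -> geom_law P (pcc n i) (tau i).

Let tau_integrable i :
  i \in index_iota 1 n.+1 -> P.-integrable setT (EFin \o tau i).
Proof.
rewrite mem_index_iota ltnS => i_in.
exact: geom_law_integrable (pcc_itv _ _ i_in) (tau_geom _ i_in).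
Qed.

Lemma coupon_time_integrable :
  P.-integrable setT (fun t => (\sum_(1 <= i < n.+1) tau i t)%:E).
Proof. exact: integrable_sum_EFin. Qed.

Lemma coupon_time_integral :
  (\int[P]_t (\sum_(1 <= i < n.+1) tau i t)%:E = (n%:R * harmonic_number n)%:E)%E.
Proof.
rewrite integral_sum_EFin // -sum_inv_pcc -sumEFin big_seq [RHS]big_seq.
apply: eq_bigr => i; rewrite mem_index_iota ltnS => i_in.
exact: geom_law_integral (pcc_itv _ _ i_in) (tau_geom _ i_in).
Qed.

Lemma measurable_Zcc : measurable_fun setT (Zcc n tau).
Proof.
rewrite /Zcc; apply: measurable_funB => //; apply: measurable_funM => //.
exact/measurable_EFinP/(measurable_int P coupon_time_integrable).
Qed.

End coupon_collector_time.

Lemma ae_le_coupled_sums {d} {T : measurableType d} {R : realType}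
    {mu : {measure set T -> \bar R}} (m : nat) (tau1 tau2 : nat -> T -> R) :
  (forall i, (1 <= i <= m)%N -> {ae mu, forall t, 0 <= tau1 i t}) ->
  {ae mu, forall t, 0 <= tau2 1%N t} ->
  (forall i, (2 <= i <= m.+1)%N -> {ae mu, forall t, tau1 i.-1 t <= tau2 i t}) ->
  {ae mu, forall t, 0 <= \sum_(1 <= i < m.+1) tau1 i t
                      <= \sum_(1 <= i < m.+2) tau2 i t}.
Proof.
move=> /ae_forall_in tau1_ge0 tau21_ge0 /ae_forall_in coupling.
apply: filterS3 tau1_ge0 tau21_ge0 coupling => t tau1t_ge0 tau21t_ge0 cpl.
rewrite big_nat sumr_ge0 //= -big_nat.
by apply: ler_sum_shift tau21t_ge0 _ => i i_in; exact: cpl i.+1 i_in.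
Qed.

Theorem lemma3p5 (R : realType) :
  exists C : R, 0 < C /\
  forall n : nat, (2 <= n)%N ->
  forall (d : measure_display) (T : measurableType d) (P : probability T R)
         (tau1 tau2 : nat -> T -> R),
    (* tau1 i = tau_i^{n-1}, i = 1..n-1 : independent, Geom(p_i^{n-1}) *)
    mutually_independent P [set i | (1 <= i <= n.-1)%N] tau1 ->
    (forall i, (1 <= i <= n.-1)%N -> geom_law P (pcc n.-1 i) (tau1 i)) ->
    (* tau2 i = tau_i^n, i = 1..n : independent, Geom(p_i^n) *)
    mutually_independent P [set i | (1 <= i <= n)%N] tau2 ->
    (forall i, (1 <= i <= n)%N -> geom_law P (pcc n i) (tau2 i)) ->
    (* coupling: tau_{i-1}^{n-1} <= tau_i^n a.s. for 2 <= i <= n *)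
    (forall i, (2 <= i <= n)%N -> {ae P, forall t, tau1 i.-1 t <= tau2 i t}) ->
    (\int[P]_t (`| Zcc n tau2 t - Zcc n.-1 tau1 t |)%:E
       <= (C * (ln n%:R / n%:R))%:E)%E.
Proof.
exists 10; split => // -[//|m] m_gt0 d T P tau1 tau2 _ geom1 _ geom2 coupling.
rewrite [m.+1.-1]/= in geom1 *.
have int1 := coupon_time_integrable geom1; have int2 := coupon_time_integrable geom2.
have sums_ae := ae_le_coupled_sums _ _ _
  (fun i i_in => geom_law_ae_ge0 (pcc_itv _ _ i_in) (geom1 i i_in))
  (geom_law_ae_ge0 (pcc_itv m.+1 1 isT) (geom2 1%N isT)) coupling.
have int_bound := integrable_affine m.+1%:R^-1
  ((m.+1%:R * m%:R)^-1 - m.+1%:R^-1) (ln m.+1%:R - ln m%:R) int2 int1.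
apply: le_trans (ge0_ae_le_integral measurableT _ _ _ _ int_bound _) _.
- by move=> t _; rewrite lee_fin.
- apply/measurable_EFinP; apply: measurableT_comp => //.
  exact: measurable_funB (measurable_Zcc geom2) (measurable_Zcc geom1).
- apply: filterS sums_ae => t /(normr_Zcc_step_le _ _ _ m_gt0) Zdist _.
  by rewrite lee_fin.
rewrite (integral_affine _ _ _ int2 int1 _ _ (coupon_time_integral geom2)
  (coupon_time_integral geom1)).
by rewrite lee_fin coupon_mean_bound.
Qed.
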